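(* Let $\mathcal{P}=\langle P,\le\rangle$ be a finite bounded poset with $|P|\ge 2$, bottom $\bot$, top $\top$, and height $H$. Define $R^{+}_{c}(a)=[\,H(\uparrow a)-1,\; H+H(\downarrow a)-2\,]$ for $a\in P$. Then: (i) for every $a\in P$ we have $H(\uparrow a)-1\le H+H(\downarrow a)-2$, so $R^{+}_{c}(a)$ is an interval with nonnegative integer endpoints; moreover, writing $R^{+}_{c}(a)=[r_*(a),r^*(a)]$, the map $r_*$ is strictly antitone and $r^*$ is strictly isotone (i.e. $a<b$ implies $r_*(a)>r_*(b)$ and $r^*(a)<r^*(b)$), and consequently $a<b$ implies $R^{+}_{c}(a)\subsetneq R^{+}_{c}(b)$; that is, $R^{+}_{c}$ is a strict interval rank function for the subset order $\subseteq$; (ii) $R^{+}_{c}(\top)=[0,2(H-1)]$ and $R^{+}_{c}(\bot)=[H-1,H-1]$; (iii) if $R:P\to\overline{\mathbb{N}}$, $R(a)=[r_*(a),r^*(a)]$, is any strict interval rank function for $\subseteq$ (i.e. $a<b$ implies $R(a)\subsetneq R(b)$, and $r_*$ is strictly antitone and $r^*$ strictly isotone) such that $0\le r_*(a)\le r^*(a)\le 2(H-1)$ for all $a\in P$, then for every $a\in P$ we have $R(a)\ge_W R^{+}_{c}(a)$, i.e. $r_*(a)\ge H(\uparrow a)-1$ and $r^*(a)\ge H+H(\downarrow a)-2$.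
   Context: A poset is bounded if it has a least element $\bot$ and a greatest element $\top$. The height $H(\mathcal{Q})$ of a finite poset is the number of elements of its largest chain; $H=H(\mathcal{P})$. For $a\in P$, $\uparrow a=\{b\in P: b\ge a\}$ and $\downarrow a=\{b\in P:b\le a\}$, viewed as subposets; $H(\uparrow a)$, $H(\downarrow a)$ are their heights. $\overline{\mathbb{N}}$ denotes the set of intervals $[x_*,x^*]$ with integers $0\le x_*\le x^*$. The subset order on intervals: $[x_*,x^*]\subseteq[y_*,y^*]$ iff $x_*\ge y_*$ and $x^*\le y^*$. The weak order: $[x_*,x^*]\le_W[y_*,y^*]$ iff $x_*\le y_*$ and $x^*\le y^*$; $\ge_W$ is its dual. *)

From mathcomp Require Import all_boot all_order.
Set Implicit Arguments. Unset Strict Implicit. Unset Printing Implicit Defensive.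
Import Order.Theory.
Local Open Scope order_scope.

Section Defs.
Context {d : Order.disp_t} {T : finPOrderType d}.

Definition chainb (C : {set T}) : bool :=
  [forall x in C, forall y in C, x >=< y].

Definition height_of (A : {set T}) : nat :=
  \max_(C : {set T} | (C \subset A) && chainb C) #|C|.

Definition upset (a : T) : {set T} := [set b | a <= b].
Definition downset (a : T) : {set T} := [set b | b <= a].

Definition height : nat := height_of [set: T].

(* intervals [x_lo, x_hi] of naturals, encoded as pairs (x_lo, x_hi) *)
Definition is_interval (x : nat * nat) : Prop := (x.1 <= x.2)%N .

Definition isub (x y : nat * nat) : bool := (y.1 <= x.1)%N && (x.2 <= y.2)%N .
Definition isubset_strict (x y : nat * nat) : bool := isub x y && (x != y).

Definition weak_le (x y : nat * nat) : bool := (x.1 <= y.1)%N && (x.2 <= y.2)%N .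

Definition strict_interval_rank (R : T -> nat * nat) : Prop :=
  (forall a, is_interval (R a)) /\
  (forall a b : T, a < b ->
     [/\ ((R b).1 < (R a).1)%N, ((R a).2 < (R b).2)%N
       & isubset_strict (R a) (R b)]).

Definition Rc (a : T) : nat * nat :=
  ((height_of (upset a)).-1, height + height_of (downset a) - 2).

End Defs.

From mathcomp Require Import all_boot all_order.
From mathcomp Require Import zify.
Import Order.Theory.
Local Open Scope order_scope.
Set Implicit Arguments. Unset Strict Implicit.

(* A strictly monotone map into nat is injective on a chain, so a chain whose
   values lie in [m, n] has at most n - m + 1 elements.  Applied to r_* on the
   chains of up(a) (values in [0, r_*(a)]) and to r^* on the chains of down(a)
   (values in [r^*(bot), r^*(a)], where r^*(bot) >= r_*(bot) >= H - 1), this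
   gives the minimality (iii).  Parts (i) and (ii) only use that a chain of
   up(b) or down(a) extends by one element when a < b. *)

Section Height.
Context {d : Order.disp_t} {T : finPOrderType d}.
Implicit Types (A B C : {set T}) (x y : T).

Lemma chainP C x y : chainb C -> x \in C -> y \in C -> x >=< y.
Proof. by move=> /forall_inP hC xC yC; move/forall_inP: (hC x xC); apply. Qed.

Lemma chainU1 C x : chainb C -> (forall y, y \in C -> x >=< y) -> chainb (x |: C).
Proof.
move=> hC hx; apply/forall_inP=> y; rewrite in_setU1 => /predU1P[->|yC];
  apply/forall_inP=> z; rewrite in_setU1 => /predU1P[->|zC].
- exact: comparablexx.
- exact: hx.
- by rewrite comparable_sym hx.
- exact: chainP hC yC zC.
Qed.

Lemma chain_set1 x : chainb [set x].
Proof.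
by apply/forall_inP=> y /set1P->; apply/forall_inP=> z /set1P->; rewrite comparablexx.
Qed.

Lemma leq_card_height A C : C \subset A -> chainb C -> (#|C| <= height_of A)%N.
Proof. by move=> sCA hC; apply: (leq_bigmax_cond C); rewrite sCA hC. Qed.

Lemma height_ofP A : exists C, [/\ C \subset A, chainb C & #|C| = height_of A].
Proof.
have : (0 < #|[pred C : {set T} | (C \subset A) && chainb C]|)%N.
  apply/card_gt0P; exists set0; rewrite inE sub0set.
  by apply/forall_inP=> x; rewrite inE.
move=> /(eq_bigmax_cond (fun C => #|C|))[C]; rewrite inE => /andP[sCA hC] eqC.
by exists C; split; rewrite // /height_of eqC.
Qed.

Lemma height_of_subset A B : A \subset B -> (height_of A <= height_of B)%N.
Proof.
move=> sAB; have [C [sCA hC <-]] := height_ofP A.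
exact: leq_card_height (subset_trans sCA sAB) hC.
Qed.

Lemma height_of_gt0 A x : x \in A -> (0 < height_of A)%N.
Proof.
by move=> xA; rewrite -(cards1 x) leq_card_height ?sub1set ?chain_set1.
Qed.

Lemma height_upset_gt0 x : (0 < height_of (upset x))%N.
Proof. by apply: (height_of_gt0 (x := x)); rewrite inE. Qed.

Lemma height_downset_gt0 x : (0 < height_of (downset x))%N.
Proof. by apply: (height_of_gt0 (x := x)); rewrite inE. Qed.

Lemma height_of_set1 x : height_of [set x] = 1%N.
Proof.
apply/anti_leq; rewrite (height_of_gt0 (set11 x)) andbT.
by have [C [sCx _ <-]] := height_ofP [set x]; rewrite -(cards1 x) subset_leq_card.
Qed.

Lemma height_of_ltU1 A B x : A \subset B -> x \in B -> x \notin A ->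
  (forall y, y \in A -> x >=< y) -> (height_of A < height_of B)%N.
Proof.
move=> sAB xB xNA hx; have [C [sCA hC <-]] := height_ofP A.
have xNC : x \notin C by apply: contra xNA; apply: subsetP.
have := @leq_card_height B (x |: C); rewrite cardsU1 xNC; apply.
  by rewrite subUset sub1set xB (subset_trans sCA sAB).
by apply: chainU1 => // y /(subsetP sCA); apply: hx.
Qed.

Lemma height_of_le_range (f : T -> nat) A m n :
    (forall x y, x < y -> f x != f y) ->
    (forall y, y \in A -> m <= f y <= n)%N ->
  (height_of A <= (n - m).+1)%N.
Proof.
move=> f_neq f_range; have [C [sCA hC <-]] := height_ofP A.
have f_inj : {in C &, injective f}.
  move=> x y xC yC fxy; case: (comparable_ltgtP (chainP hC xC yC)) => // lt_xy;
  by move: (f_neq _ _ lt_xy); rewrite fxy eqxx.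
rewrite cardE -(size_map f) -(size_iota m (n - m).+1) uniq_leq_size //.
  by rewrite map_inj_in_uniq ?enum_uniq // => x y; rewrite !mem_enum; apply: f_inj.
move=> _ /mapP[y + ->]; rewrite mem_enum mem_iota => /(subsetP sCA)/f_range.
lia.
Qed.

Lemma height_upset_lt x y : x < y -> (height_of (upset y) < height_of (upset x))%N.
Proof.
move=> lt_xy; apply: (height_of_ltU1 (x := x)); rewrite ?inE ?lexx ?lt_geF //.
  by apply/subsetP=> z; rewrite !inE; apply: le_trans (ltW lt_xy).
by move=> z; rewrite inE => le_yz; apply/le_comparable/(le_trans (ltW lt_xy)).
Qed.

Lemma height_downset_lt x y : x < y -> (height_of (downset x) < height_of (downset y))%N.
Proof.
move=> lt_xy; apply: (height_of_ltU1 (x := y)); rewrite ?inE ?lexx ?lt_geF //.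
  by apply/subsetP=> z; rewrite !inE => le_zx; apply: le_trans le_zx (ltW lt_xy).
move=> z; rewrite inE => le_zx.
by rewrite comparable_sym; apply/le_comparable/(le_trans le_zx (ltW lt_xy)).
Qed.

End Height.

Section BoundedHeight.
Context {d : Order.disp_t} {T : finTBPOrderType d}.
Implicit Types (x y : T) (f : T -> nat).

Lemma upset_bot : upset (\bot : T) = [set: T].
Proof. by apply/setP=> x; rewrite !inE le0x. Qed.

Lemma downset_top : downset (\top : T) = [set: T].
Proof. by apply/setP=> x; rewrite !inE lex1. Qed.

Lemma upset_top : upset (\top : T) = [set \top].
Proof. by apply/setP=> x; rewrite !inE eq_le lex1. Qed.

Lemma downset_bot : downset (\bot : T) = [set \bot].
Proof. by apply/setP=> x; rewrite !inE eq_le le0x andbT. Qed.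

Lemma height_gt0 : (0 < @height d T)%N.
Proof. exact: (height_of_gt0 (in_setT \bot)). Qed.

Lemma height_upset_le f (f_anti : forall x y, x < y -> (f y < f x)%N) x :
  ((height_of (upset x)).-1 <= f x)%N.
Proof.
suff : (height_of (upset x) <= (f x - 0).+1)%N by lia.
apply: (height_of_le_range (f := f)) => [y z /f_anti/ltn_eqF|y].
  by rewrite eq_sym => ->.
by rewrite inE le_eqVlt => /predU1P[->|/f_anti/ltnW->]; rewrite ?leq0n ?leqnn.
Qed.

Lemma height_downset_le f (f_iso : forall x y, x < y -> (f x < f y)%N) x :
  (f \bot + (height_of (downset x)).-1 <= f x)%N.
Proof.
have le_bot y : (f \bot <= f y)%N.
  by case: (eqVneq \bot y) => [->//|neq]; apply/ltnW/f_iso; rewrite lt_neqAle neq le0x.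
suff : (height_of (downset x) <= (f x - f \bot).+1)%N by have := le_bot x; lia.
apply: (height_of_le_range (f := f)) => [y z /f_iso/ltn_eqF->//|y].
by rewrite inE le_bot le_eqVlt => /predU1P[->|/f_iso/ltnW->]; rewrite ?leqnn.
Qed.

End BoundedHeight.

Lemma isubset_strict_lt (x y : nat * nat) :
  (y.1 < x.1)%N -> (x.2 < y.2)%N -> isubset_strict x y.
Proof.
move=> lt1 lt2; rewrite /isubset_strict /isub (ltnW lt1) (ltnW lt2) /=.
by apply: contraTneq lt2 => ->; rewrite ltnn.
Qed.

Section IntervalRank.
Context {d : Order.disp_t} {T : finTBPOrderType d}.
Implicit Types (a b : T).

Lemma Rc_interval a : is_interval (Rc a).
Proof.
rewrite /is_interval /Rc /=.
have := height_of_subset (subsetT (upset a)).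
have := height_downset_gt0 a; rewrite /height; lia.
Qed.

Lemma Rc_lt a b : a < b -> ((Rc b).1 < (Rc a).1)%N /\ ((Rc a).2 < (Rc b).2)%N.
Proof.
move=> lt_ab; rewrite /Rc /=; have := height_upset_lt lt_ab.
have := height_downset_lt lt_ab.
have := height_upset_gt0 b; have := height_downset_gt0 a; have := @height_gt0 d T.
lia.
Qed.

Lemma Rc_strict_interval_rank : strict_interval_rank (@Rc d T).
Proof.
split=> [|a b /Rc_lt[lt1 lt2]]; first exact: Rc_interval.
by split=> //; apply: isubset_strict_lt.
Qed.

Lemma Rc_top : Rc (\top : T) = (0%N, (2 * (@height d T).-1)%N).
Proof.
(* Folding back to [height] makes both occurrences one atom for [lia]. *)
rewrite /Rc upset_top downset_top height_of_set1 -[height_of _]/(@height d T).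
by have hpos := @height_gt0 d T; congr (_, _); lia.
Qed.

Lemma Rc_bot : Rc (\bot : T) = ((@height d T).-1, (@height d T).-1).
Proof.
rewrite /Rc upset_bot downset_bot height_of_set1 -[height_of [set: T]]/(@height d T).
by have hpos := @height_gt0 d T; congr (_, _); lia.
Qed.

Lemma Rc_weak_le (R : T -> nat * nat) :
  strict_interval_rank R -> forall a, weak_le (Rc a) (R a).
Proof.
move=> [R_interval R_lt].
have lo_anti x y : x < y -> ((R y).1 < (R x).1)%N by case/R_lt.
have hi_iso x y : x < y -> ((R x).2 < (R y).2)%N by case/R_lt.
have hi_bot : ((@height d T).-1 <= (R \bot).2)%N.
  have := height_upset_le lo_anti \bot; rewrite upset_bot => h.
  exact: leq_trans h (R_interval _).
move=> a; rewrite /weak_le /Rc /= (height_upset_le lo_anti) /=.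
have := height_downset_le hi_iso a; have := @height_gt0 d T; lia.
Qed.

End IntervalRank.

Theorem proposition3 (d : Order.disp_t) (T : finTBPOrderType d)
    (hT : (1 < #|T|)%N) :
  (* (i) *)
  ((forall a : T, ((height_of (upset a)).-1 <= @height d T + height_of (downset a) - 2)%N)
   /\ (forall a b : T, a < b -> ((Rc b).1 < (Rc a).1)%N /\ ((Rc a).2 < (Rc b).2)%N)
   /\ (forall a b : T, a < b -> isubset_strict (Rc a) (Rc b))
   /\ strict_interval_rank (@Rc d T))
  (* (ii) *)
  /\ (Rc (\top : T) = (0%N, (2 * (@height d T).-1)%N)
      /\ Rc (\bot : T) = ((@height d T).-1, (@height d T).-1))
  (* (iii) *)
  /\ (forall R : T -> nat * nat,
        strict_interval_rank R ->
        (forall a, ((R a).2 <= 2 * (@height d T).-1)%N) ->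
        forall a, weak_le (Rc a) (R a)).
Proof.
split; [split; [|split; [|split]] | split; [split|]].
- exact: Rc_interval.
- exact: Rc_lt.
- by move=> a b /Rc_lt[lt1 lt2]; apply: isubset_strict_lt.
- exact: Rc_strict_interval_rank.
- exact: Rc_top.
- exact: Rc_bot.
- by move=> R R_rank _; apply: Rc_weak_le.
Qed.
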